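(* For every $i\in\{0,1,2\}$, $\mathcal{Z}_2\equiv_{\mathrm{m}}\mathrm{Clo}(d_i)$.
   Context: On $\{0,1,2\}$, define $d_i(x,y,z)=\mathrm{min}(x,y,z)$ if $|\{x,y,z\}|\leq2$ and $d_i(x,y,z)=i$ if $|\{x,y,z\}|=3$, where $\mathrm{min}$ is the minority operation ($\mathrm{min}(x,y,y)=\mathrm{min}(y,x,y)=\mathrm{min}(y,y,x)=x$, and $\mathrm{min}(x,x,x)=x$). $\mathrm{Clo}(d_i)$ is the clone generated by $d_i$. $\mathcal{Z}_2=\mathrm{Pol}(\{0,1\};\{(x,y,z,x-y+z\bmod2)\},\{0\},\{1\})$ is the clone of idempotent affine operations modulo 2 on $\{0,1\}$. For an $n$-ary $f$ and $\sigma\colon[n]\to[r]$, $f_\sigma(x_1,\dots,x_r)=f(x_{\sigma(1)},\dots,x_{\sigma(n)})$; a minion homomorphism is an arity-preserving map $\xi$ between clones with $\xi(f_\sigma)=\xi(f)_\sigma$; $\equiv_{\mathrm{m}}$ means minion homomorphisms exist in both directions. *)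

From mathcomp Require Import all_boot all_algebra.
Set Implicit Arguments. Unset Strict Implicit. Unset Printing Implicit Defensive.
Import GRing.Theory.
Local Open Scope ring_scope.

(* n-ary operations on a finite set A: functions A^n -> A, where A^n is
   represented as finite functions 'I_n -> A (so equality is extensional). *)
Definition op (A : finType) (n : nat) := {ffun {ffun 'I_n -> A} -> A}.

Definition opset (A : finType) := forall n : nat, op A n -> Prop.

Definition minor (A : finType) (n r : nat) (sigma : 'I_n -> 'I_r) (f : op A n)
  : op A r := [ffun x : {ffun 'I_r -> A} => f [ffun i => x (sigma i)]].

Definition proj (A : finType) (n : nat) (i : 'I_n) : op A n :=
  [ffun x : {ffun 'I_n -> A} => x i].

(* Clo(d): the clone generated by a ternary operation d, i.e. the smallest set
   of operations containing all projections and closed under composition with d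
   (= the set of term operations of d). *)
Inductive Clo3 (A : finType) (d : op A 3) : opset A :=
| Clo3_proj n (i : 'I_n) : Clo3 d (proj A i)
| Clo3_comp n (g : 'I_3 -> op A n) :
    (forall j, Clo3 d (g j)) ->
    Clo3 d [ffun x : {ffun 'I_n -> A} => d [ffun j => g j x]].

Definition preserves (A : finType) (n k : nat) (f : op A n)
  (R : {ffun 'I_k -> A} -> Prop) : Prop :=
  forall rows : 'I_n -> {ffun 'I_k -> A},
    (forall i, R (rows i)) -> R [ffun j => f [ffun i => rows i j]].

(* Z_2 = Pol({0,1}; {(x,y,z,x-y+z mod 2)}, {0}, {1}), on {0,1} = 'Z_2 = 'I_2 *)
Definition affine_rel (t : {ffun 'I_4 -> 'Z_2}) : Prop :=
  t (inord 3) = t (inord 0) - t (inord 1) + t (inord 2).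
Definition const_rel (c : 'Z_2) (t : {ffun 'I_1 -> 'Z_2}) : Prop :=
  t ord0 = c.

Definition Z2clone : opset 'Z_2 := fun n f =>
  preserves f affine_rel /\ preserves f (const_rel 0) /\ preserves f (const_rel 1).

(* d_i on {0,1,2} = 'I_3: minority if at most two distinct values, i otherwise *)
Definition d_op (i : 'I_3) : op 'I_3 3 :=
  [ffun x : {ffun 'I_3 -> 'I_3} =>
     let a := x (inord 0) in let b := x (inord 1) in let c := x (inord 2) in
     if a == b then c else if b == c then a else if a == c then b else i].

Definition minion_hom (A B : finType) (C : opset A) (D : opset B)
  (xi : forall n, op A n -> op B n) : Prop :=
  (forall n (f : op A n), C n f -> D n (xi n f)) /\
  (forall n r (sigma : 'I_n -> 'I_r) (f : op A n),
      C n f -> xi r (minor sigma f) = minor sigma (xi n f)).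

Definition minion_le (A B : finType) (C : opset A) (D : opset B) : Prop :=
  exists xi : forall n, op A n -> op B n, minion_hom C D xi.

Definition minion_equiv (A B : finType) (C : opset A) (D : opset B) : Prop :=
  minion_le C D /\ minion_le D C.

(* The set {0, 1} is closed under d_i, which acts on it as the minority
   operation x + y + z (mod 2); hence restricting the term operations of d_i to
   {0, 1} is a minion homomorphism into Z_2.
   Conversely, an operation of Z_2 is a sum x_j1 + ... + x_jk over a support
   of odd size k.  We send it to the operation on {0, 1, 2} returning the
   unique value of odd multiplicity among x_j1, ..., x_jk, or i when all three
   values have odd multiplicity.  This operation is read off from the values of
   f on 0/1-vectors, so the map commutes with minors; and it is a term
   operation of d_i, since the "odd vote" on k + 2 arguments is obtained from
   odd votes on k arguments by an identity involving d_i alone. *)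

From mathcomp Require Import all_boot all_algebra ring.
Set Implicit Arguments. Unset Strict Implicit. Unset Printing Implicit Defensive.
Import GRing.Theory.
Local Open Scope ring_scope.

Section TermOperations.

Variable A : finType.

Lemma preserves_proj n k (R : {ffun 'I_k -> A} -> Prop) (j : 'I_n) :
  preserves (proj A j) R.
Proof.
move=> rows Rrows; rewrite (_ : [ffun t => _] = rows j) //.
by apply/ffunP => t; rewrite !ffunE.
Qed.

Lemma preserves_comp m n k (R : {ffun 'I_k -> A} -> Prop) (d : op A m)
    (g : 'I_m -> op A n) :
  preserves d R -> (forall j, preserves (g j) R) ->
  preserves [ffun x => d [ffun j => g j x]] R.
Proof.
move=> Rd Rg rows Rrows.
have := Rd (fun j => [ffun t => g j [ffun i => rows i t]]) (fun j => Rg j _ Rrows).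
congr R; apply/ffunP => t; rewrite !ffunE; congr (d _).
by apply/ffunP => j; rewrite !ffunE.
Qed.

Lemma Clo3_preserves k (R : {ffun 'I_k -> A} -> Prop) (d : op A 3) n (f : op A n) :
  preserves d R -> Clo3 d f -> preserves f R.
Proof.
move=> Rd; elim=> {n f} [n j | n g _ Rg]; first exact: preserves_proj.
exact: preserves_comp.
Qed.

Definition app3 (d : op A 3) (a b c : A) : A := d [ffun j : 'I_3 => nth a [:: a; b; c] j].

Definition comp3 (d : op A 3) n (g0 g1 g2 : op A n) : op A n :=
  [ffun x => app3 d (g0 x) (g1 x) (g2 x)].

Lemma Clo3_comp3 (d : op A 3) n (g0 g1 g2 : op A n) :
  Clo3 d g0 -> Clo3 d g1 -> Clo3 d g2 -> Clo3 d (comp3 d g0 g1 g2).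
Proof.
move=> C0 C1 C2; set g := fun j : 'I_3 => nth g0 [:: g0; g1; g2] j.
rewrite (_ : comp3 _ _ _ _ = [ffun x => d [ffun j => g j x]]).
  by apply: Clo3_comp => -[[|[|[|]]]].
apply/ffunP => x; rewrite !ffunE; congr (d _); apply/ffunP => j.
by rewrite !ffunE; case: j => -[|[|[|]]].
Qed.

End TermOperations.

Section Restriction.

Variables (A B : finType) (emb : B -> A) (back : A -> B).
Hypothesis embK : cancel emb back.
Variables (d : op A 3) (m : op B 3).
Hypothesis d_emb : forall x : {ffun 'I_3 -> B}, d [ffun j => emb (x j)] = emb (m x).

Definition restrict n (f : op A n) : op B n :=
  [ffun x : {ffun 'I_n -> B} => back (f [ffun j => emb (x j)])].

Lemma restrict_minor n r (sigma : 'I_n -> 'I_r) (f : op A n) :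
  restrict (minor sigma f) = minor sigma (restrict f).
Proof.
apply/ffunP => x; rewrite !ffunE; congr (back (f _)).
by apply/ffunP => j; rewrite !ffunE.
Qed.

Lemma comp_emb n (g : 'I_3 -> op A n) (x : {ffun 'I_n -> B}) :
    (forall j, g j [ffun k => emb (x k)] = emb (restrict (g j) x)) ->
  [ffun y => d [ffun j => g j y]] [ffun k => emb (x k)] =
    emb (m [ffun j => restrict (g j) x]).
Proof.
move=> g_emb; rewrite ffunE -d_emb; congr (d _).
by apply/ffunP => j; rewrite ffunE g_emb !ffunE.
Qed.

Lemma Clo3_emb_restrict n (f : op A n) (x : {ffun 'I_n -> B}) :
  Clo3 d f -> f [ffun j => emb (x j)] = emb (restrict f x).
Proof.
move=> Cf; elim: Cf x => {n f} [n j | n g _ IHg] x.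
  by rewrite !ffunE embK.
by rewrite [in RHS]ffunE comp_emb // embK.
Qed.

Lemma Clo3_restrict n (f : op A n) : Clo3 d f -> Clo3 m (restrict f).
Proof.
elim=> {n f} [n j | n g Cg IHg].
  rewrite (_ : restrict _ = proj B j); first exact: Clo3_proj.
  by apply/ffunP => x; rewrite !ffunE embK.
rewrite (_ : restrict _ = [ffun x => m [ffun j => restrict (g j) x]]).
  exact: Clo3_comp.
apply/ffunP => x; rewrite [LHS]ffunE comp_emb ?embK ?ffunE //.
by move=> j; apply: Clo3_emb_restrict (Cg j).
Qed.

End Restriction.

Lemma sumr_count (R : pzSemiRingType) (I : Type) (s : seq I) (p : pred I) :
  \sum_(j <- s) (p j)%:R = (count p s)%:R :> R.
Proof.
rewrite -sum1_count natr_sum [RHS]big_mkcond.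
by apply: eq_bigr => j _; case: (p j).
Qed.

Lemma Z2_cases (a : 'Z_2) : a = 0 \/ a = 1.
Proof. by case: a => -[|[|]] // ?; [left | right]; apply/val_inj. Qed.

Lemma Z2_natr_eq1 k : ((k%:R : 'Z_2) == 1) = odd k.
Proof. by rewrite -(@Zp_nat_mod 2) // modn2; case: (odd k). Qed.

Lemma sum_Z2_supportC (I : finType) (a b : I -> 'Z_2) :
  \sum_(j | a j == 1) b j = \sum_(j | b j == 1) a j.
Proof.
rewrite big_mkcond [RHS]big_mkcond; apply: eq_bigr => j _.
by case: (Z2_cases (a j)) => ->; case: (Z2_cases (b j)) => ->.
Qed.

Definition minority2 : op 'Z_2 3 :=
  [ffun x : {ffun 'I_3 -> 'Z_2} => x (inord 0) + x (inord 1) + x (inord 2)].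

Lemma minority2_Z2clone : Z2clone minority2.
Proof.
split; [|split] => rows Rrows; rewrite /affine_rel /const_rel !ffunE !(Rrows _).
  by ring.
all: exact/eqP.
Qed.

Lemma Clo3_minority2_Z2clone n (f : op 'Z_2 n) : Clo3 minority2 f -> Z2clone f.
Proof.
have [Raff [R0 R1]] := minority2_Z2clone.
by move=> Cf; split; [|split]; apply: Clo3_preserves Cf.
Qed.

Section Z2cloneLinear.

Variables (n : nat) (f : op 'Z_2 n).
Hypothesis Z2f : Z2clone f.

Lemma Z2clone_affine (a b c : {ffun 'I_n -> 'Z_2}) : f (a - b + c) = f a - f b + f c.
Proof.
pose rows k := [ffun t : 'I_4 => nth 0 [:: a k; b k; c k; (a - b + c) k] t].
have col (t : nat) :
    (t < 4)%N -> [ffun k => rows k (inord t)] = nth 0 [:: a; b; c; a - b + c] t.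
  move=> lt_t4; apply/ffunP => k; rewrite !ffunE inordK //.
  by case: t lt_t4 => [|[|[|[|]]]] //= _; rewrite !ffunE.
have := Z2f.1 rows; rewrite /affine_rel !ffunE !col //; apply=> k.
by rewrite !ffunE !inordK.
Qed.

Lemma Z2clone_const (c : 'Z_2) : f [ffun => c] = c.
Proof.
have Rc : preserves f (const_rel c).
  by case: (Z2_cases c) => ->; [exact: Z2f.2.1 | exact: Z2f.2.2].
by have := Rc (fun=> [ffun => c]); rewrite /const_rel !ffunE; apply.
Qed.

Lemma Z2clone0 : f 0 = 0.
Proof.
by rewrite -[RHS](Z2clone_const 0); congr (f _); apply/ffunP => k; rewrite !ffunE.
Qed.

Lemma Z2clone_add (a b : {ffun 'I_n -> 'Z_2}) : f (a + b) = f a + f b.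
Proof. by have := Z2clone_affine a 0 b; rewrite subr0 Z2clone0 subr0. Qed.

Definition unit_vec (j : 'I_n) : {ffun 'I_n -> 'Z_2} := [ffun k => (k == j)%:R].

Definition Z2_support : seq 'I_n := [seq j <- enum 'I_n | f (unit_vec j) == 1].

Lemma Z2clone_sum (z : {ffun 'I_n -> 'Z_2}) : f z = \sum_(j <- Z2_support) z j.
Proof.
have z_sum : z = \sum_(j | z j == 1) unit_vec j.
  apply/ffunP => k; rewrite sum_ffunE sum_Z2_supportC (big_pred1 k) // => j.
  by rewrite ffunE Z2_natr_eq1 oddb eq_sym.
rewrite {1}z_sum (big_morph f Z2clone_add Z2clone0) sum_Z2_supportC big_filter.
by rewrite big_enum_cond.
Qed.

Lemma Z2clone_indicator (p : pred 'I_n) :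
  f [ffun j => (p j)%:R] = (count p Z2_support)%:R.
Proof. by rewrite Z2clone_sum; under eq_bigr do rewrite ffunE; apply: sumr_count. Qed.

Lemma odd_size_Z2_support : odd (size Z2_support).
Proof.
rewrite -count_predT -Z2_natr_eq1 -Z2clone_indicator.
by rewrite -[X in _ == X](Z2clone_const 1).
Qed.

End Z2cloneLinear.

Local Notation o0 := (@Ordinal 3 0 isT).
Local Notation o1 := (@Ordinal 3 1 isT).
Local Notation o2 := (@Ordinal 3 2 isT).

Lemma I3_ind (P : 'I_3 -> Prop) : P o0 -> P o1 -> P o2 -> forall v, P v.
Proof. by move=> P0 P1 P2 [[|[|[|//]]] lt_v3]; rewrite (bool_irrelevance lt_v3 isT). Qed.

Definition d3 (i a b c : 'I_3) : 'I_3 :=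
  if a == b then c else if b == c then a else if a == c then b else i.

Lemma app3_d_op i a b c : app3 (d_op i) a b c = d3 i a b c.
Proof. by rewrite /app3 ffunE !ffunE !inordK. Qed.

Definition Z2_to_I3 (z : 'Z_2) : 'I_3 := widen_ord (isT : (2 <= 3)%N) z.

Definition I3_to_Z2 (v : 'I_3) : 'Z_2 := inord v.

Lemma Z2_to_I3K : cancel Z2_to_I3 I3_to_Z2.
Proof. by move=> z; rewrite /I3_to_Z2 inord_val. Qed.

Lemma d_op_on_Z2 i (x : {ffun 'I_3 -> 'Z_2}) :
  d_op i [ffun j => Z2_to_I3 (x j)] = Z2_to_I3 (minority2 x).
Proof.
rewrite !ffunE; move: (x (inord 0)) (x (inord 1)) (x (inord 2)) => a b c.
by case: (Z2_cases a) => ->; case: (Z2_cases b) => ->; case: (Z2_cases c) => ->;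
  apply/val_inj.
Qed.

Definition unique_odd (i : 'I_3) (p0 p1 p2 : bool) : 'I_3 :=
  if [&& p0, ~~ p1 & ~~ p2] then o0
  else if [&& ~~ p0, p1 & ~~ p2] then o1
  else if [&& ~~ p0, ~~ p1 & p2] then o2
  else i.

Definition odd_vote (i : 'I_3) (vs : seq 'I_3) : 'I_3 :=
  unique_odd i (odd (count_mem o0 vs)) (odd (count_mem o1 vs)) (odd (count_mem o2 vs)).

Lemma odd_vote1 i v : odd_vote i [:: v] = v.
Proof. by elim/I3_ind: v. Qed.

Lemma odd_vote_cons3 i a b c vs :
  odd_vote i [:: a, b, c & vs] =
  d3 i (odd_vote i (d3 i a b c :: vs)) (d3 i (d3 i a b c) (odd_vote i (c :: vs)) c)
    (d3 i a b (odd_vote i (c :: vs))).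
Proof.
rewrite /odd_vote /= !oddD.
move: (odd (count _ vs)) (odd (count _ vs)) (odd (count _ vs)) => q0 q1 q2.
by case: q0; case: q1; case: q2;
  elim/I3_ind: i; elim/I3_ind: a; elim/I3_ind: b; elim/I3_ind: c.
Qed.

Section OddVoteClone.

Variable i : 'I_3.

Local Notation d := (comp3 (d_op i)).

Definition vote_op n (fs : seq (op 'I_3 n)) : op 'I_3 n :=
  [ffun x => odd_vote i [seq (g : op 'I_3 n) x | g <- fs]].

Lemma vote_op_cons3 n (f1 f2 f3 : op 'I_3 n) fs :
  vote_op [:: f1, f2, f3 & fs] =
  d (vote_op (d f1 f2 f3 :: fs)) (d (d f1 f2 f3) (vote_op (f3 :: fs)) f3)
    (d f1 f2 (vote_op (f3 :: fs))).
Proof.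
by apply/ffunP => x; rewrite /comp3 !ffunE /= odd_vote_cons3 !ffunE !app3_d_op.
Qed.

Lemma Clo3_vote_op n (fs : seq (op 'I_3 n)) :
  odd (size fs) -> {in fs, forall g, Clo3 (d_op i) g} -> Clo3 (d_op i) (vote_op fs).
Proof.
have [m] := ubnP (size fs); elim: m fs => // m IH.
move=> [|f1 [|f2 [|f3 fs]]] //= lt_fs odd_fs Cfs.
  rewrite (_ : vote_op _ = f1); first by apply: Cfs; rewrite mem_head.
  by apply/ffunP => x; rewrite ffunE odd_vote1.
have Cf1 : Clo3 (d_op i) f1 by apply: Cfs; rewrite !inE eqxx.
have Cf2 : Clo3 (d_op i) f2 by apply: Cfs; rewrite !inE eqxx orbT.
have Cf3 : Clo3 (d_op i) f3 by apply: Cfs; rewrite !inE eqxx !orbT.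
have Ccons g : Clo3 (d_op i) g -> Clo3 (d_op i) (vote_op (g :: fs)).
  move=> Cg; apply: IH => /=; first by rewrite ltnS in lt_fs; apply: ltnW.
    by rewrite negbK in odd_fs.
  move=> h; rewrite inE => /predU1P [-> // | fs_h].
  by apply: Cfs; rewrite !inE fs_h !orbT.
have Cd123 := Clo3_comp3 Cf1 Cf2 Cf3.
rewrite vote_op_cons3; apply: Clo3_comp3; first exact: Ccons Cd123.
  exact: Clo3_comp3 Cd123 (Ccons _ Cf3) Cf3.
exact: Clo3_comp3 Cf1 Cf2 (Ccons _ Cf3).
Qed.

End OddVoteClone.

Definition vote_lift (i : 'I_3) n (f : op 'Z_2 n) : op 'I_3 n :=
  [ffun x : {ffun 'I_n -> 'I_3} =>
     let odd_on c := f [ffun j => (x j == c)%:R] == 1 in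
     unique_odd i (odd_on o0) (odd_on o1) (odd_on o2)].

Lemma vote_lift_minor i n r (sigma : 'I_n -> 'I_r) (f : op 'Z_2 n) :
  vote_lift i (minor sigma f) = minor sigma (vote_lift i f).
Proof.
apply/ffunP => x; rewrite /minor !ffunE /=; congr (unique_odd _ _ _ _);
  by rewrite !ffunE; congr (f _ == 1); apply/ffunP => j; rewrite !ffunE.
Qed.

Lemma vote_lift_Clo3 i n (f : op 'Z_2 n) : Z2clone f -> Clo3 (d_op i) (vote_lift i f).
Proof.
move=> Z2f; rewrite (_ : vote_lift i f = vote_op i [seq proj _ j | j <- Z2_support f]).
  apply: Clo3_vote_op; first by rewrite size_map odd_size_Z2_support.
  by move=> g /mapP [j _ ->]; exact: Clo3_proj.
apply/ffunP => x; rewrite !ffunE -map_comp /odd_vote.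
congr (unique_odd _ _ _ _);
  by rewrite count_map (Z2clone_indicator Z2f) Z2_natr_eq1; congr odd;
  apply: eq_count => j; rewrite /= ffunE.
Qed.

Theorem lemma7p1 : forall i : 'I_3, minion_equiv Z2clone (Clo3 (d_op i)).
Proof.
move=> i; split.
  exists (@vote_lift i); split; first by move=> n f; apply: vote_lift_Clo3.
  by move=> n r sigma f _; apply: vote_lift_minor.
exists (@restrict _ _ Z2_to_I3 I3_to_Z2); split.
  by move=> n f Cf; apply/Clo3_minority2_Z2clone/(Clo3_restrict Z2_to_I3K (d_op_on_Z2 i)).
by move=> n r sigma f _; apply: restrict_minor.
Qed.
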